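(* Let $x_0, x_1, x_2, \dots \in \mathbb{R}^m$ be a sequence of sparse vectors with supports $\mathcal{N}_t := \operatorname{supp}(x_t)$, observed noise-free as $y_t := A_t x_t$ with $A_t \in \mathbb{R}^{n_t \times m}$. Let $s_t := |\mathcal{N}_t|$, $u_t := |\mathcal{N}_t \setminus \mathcal{N}_{t-1}|$ and $e_t := |\mathcal{N}_{t-1} \setminus \mathcal{N}_t|$. Run the following recursive procedure (dynamic Modified-CS with $\epsilon = 0$, $\alpha = 0$): at $t=0$, let $\hat{x}_0$ be a solution of $\min_b \|b\|_1$ subject to $y_0 = A_0 b$, and set $\hat{\mathcal{N}}_0 := \{i : (\hat{x}_0)_i \neq 0\}$; for each $t > 0$, set $\mathcal{T} := \hat{\mathcal{N}}_{t-1}$, let $\hat{x}_t$ be a solution of $\min_b \|b_{\mathcal{T}^c}\|_1$ subject to $y_t = A_t b$, and set $\hat{\mathcal{N}}_t := \{i : (\hat{x}_t)_i \neq 0\}$. If $\delta_{2 s_0}(A_0) \le 0.2$ and, for all $t > 0$, $\delta_{s_t + u_t + e_t}(A_t) \le 0.2$, then $\hat{x}_t = x_t$ (exact recovery, with the minimizer unique) for all $t \ge 0$.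
   Context: For a vector $v$ and index set $\mathcal{T} \subseteq \{1,\dots,m\}$, $v_{\mathcal{T}}$ is the subvector of entries indexed by $\mathcal{T}$, and $\mathcal{T}^c$ is the complement of $\mathcal{T}$ in $\{1,\dots,m\}$. The restricted isometry constant $\delta_s(A)$ of a matrix $A$ is the smallest real number $\delta$ such that $(1-\delta)\|b\|_2^2 \le \|Ab\|_2^2 \le (1+\delta)\|b\|_2^2$ for all vectors $b$ with at most $s$ nonzero entries. *)

From HB Require Import structures.
From mathcomp Require Import all_boot all_order all_algebra.
Set Implicit Arguments. Unset Strict Implicit. Unset Printing Implicit Defensive.
Import Order.TTheory GRing.Theory Num.Theory.
Local Open Scope ring_scope.

Definition supp (R : rcfType) (m : nat) (b : 'cV[R]_m) : {set 'I_m} :=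
  [set i | b i 0 != 0].

Definition sqnorm (R : rcfType) (k : nat) (v : 'cV[R]_k) : R :=
  \sum_(i < k) (v i 0) ^+ 2.

Definition l1_off (R : rcfType) (m : nat) (T : {set 'I_m}) (b : 'cV[R]_m) : R :=
  \sum_(i < m | i \notin T) `|b i 0|.

Definition is_l1sol (R : rcfType) (n m : nat) (A : 'M[R]_(n, m)) (y : 'cV[R]_n)
    (T : {set 'I_m}) (b : 'cV[R]_m) : Prop :=
  y = A *m b /\ forall b' : 'cV[R]_m, y = A *m b' -> l1_off T b <= l1_off T b'.

Definition rip_ineq (R : rcfType) (n m : nat) (A : 'M[R]_(n, m)) (s : nat) (d : R) : Prop :=
  forall b : 'cV[R]_m, (#|supp b| <= s)%N ->
    (1 - d) * sqnorm b <= sqnorm (A *m b) /\ sqnorm (A *m b) <= (1 + d) * sqnorm b.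

Definition is_RIC (R : rcfType) (n m : nat) (A : 'M[R]_(n, m)) (s : nat) (d : R) : Prop :=
  rip_ineq A s d /\ forall d', rip_ineq A s d' -> d <= d'.

Definition prevT (R : rcfType) (m : nat) (xhat : nat -> 'cV[R]_m) (t : nat) : {set 'I_m} :=
  if t is t'.+1 then supp (xhat t') else set0.

(* A noise-free Modified-CS step with known part [T] recovers [x] exactly, and uniquely,
   once [delta_{|T| + 2 |supp x \ T|}(A) < 1/3].  Indeed every nonzero [h] with [A h = 0]
   has strictly less l1 mass on [supp x \ T] than off [T \cup supp x]; this is Candes'
   shelling argument: the tail of [h] is cut into blocks of size [|supp x \ T|] of
   decreasing magnitude, and the RIP bounds the correlation of each block with the head.
   By induction [xhat_{t-1} = x_{t-1}], so [T = N_{t-1}] and the RIP order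
   [|N_{t-1}| + 2 |N_t \ N_{t-1}|] is exactly [s_t + u_t + e_t]. *)

From HB Require Import structures.
From mathcomp Require Import all_boot all_order all_algebra.
From mathcomp Require Import ring lra zify.
Set Implicit Arguments. Unset Strict Implicit. Unset Printing Implicit Defensive.
Import Order.TTheory GRing.Theory Num.Theory.
Local Open Scope ring_scope.

Lemma sqr_sum_le (R : realDomainType) (I : finType) (S : {set I}) (f : I -> R) :
  (\sum_(i in S) f i) ^+ 2 <= #|S|%:R * \sum_(i in S) f i ^+ 2.
Proof.
rewrite expr2 mulr_suml -(@ler_pM2l _ 2) ?ltr0n // [X in X <= _]mulr_sumr.
apply: (@le_trans _ _ (\sum_(i in S) \sum_(j in S) (f i ^+ 2 + f j ^+ 2))).
  apply: ler_sum => i _; rewrite !mulr_sumr; apply: ler_sum => j _.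
  by rewrite -subr_ge0 (_ : _ - _ = (f i - f j) ^+ 2) ?sqr_ge0 //; ring.
rewrite (eq_bigr (fun i => f i ^+ 2 *+ #|S| + \sum_(j in S) f j ^+ 2)); last first.
  by move=> i _; rewrite big_split /= sumr_const.
by rewrite big_split /= sumr_const sumrMnl mulr2n mulr_natl mulrDl mul1r.
Qed.

Section Euclidean.
Variable R : rcfType.
Implicit Types (k : nat) (a : R).

Definition dotv k (u v : 'cV[R]_k) : R := \sum_(i < k) u i 0 * v i 0.
Definition normv k (u : 'cV[R]_k) : R := Num.sqrt (sqnorm u).

Lemma sqnorm_dotv k (u : 'cV[R]_k) : sqnorm u = dotv u u.
Proof. by apply: eq_bigr => i _; rewrite expr2. Qed.

Lemma dotvC k (u v : 'cV[R]_k) : dotv u v = dotv v u.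
Proof. by apply: eq_bigr => i _; rewrite mulrC. Qed.

Lemma dotvDl k (u v w : 'cV[R]_k) : dotv (u + v) w = dotv u w + dotv v w.
Proof. by rewrite /dotv -big_split; apply: eq_bigr => i _; rewrite !mxE mulrDl. Qed.

Lemma dotvZl k a (u w : 'cV[R]_k) : dotv (a *: u) w = a * dotv u w.
Proof. by rewrite /dotv mulr_sumr; apply: eq_bigr => i _; rewrite !mxE mulrA. Qed.

Lemma dotvDr k (u v w : 'cV[R]_k) : dotv w (u + v) = dotv w u + dotv w v.
Proof. by rewrite !(dotvC w) dotvDl. Qed.

Lemma dotvZr k a (u w : 'cV[R]_k) : dotv w (a *: u) = a * dotv w u.
Proof. by rewrite !(dotvC w) dotvZl. Qed.

Lemma dotvNr k (u w : 'cV[R]_k) : dotv w (- u) = - dotv w u.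
Proof. by rewrite -scaleN1r dotvZr mulN1r. Qed.

Lemma dotv0r k (w : 'cV[R]_k) : dotv w 0 = 0.
Proof. by rewrite -(scale0r 0) dotvZr mul0r. Qed.

Lemma sqnorm_ge0 k (u : 'cV[R]_k) : 0 <= sqnorm u.
Proof. by apply: sumr_ge0 => i _; rewrite sqr_ge0. Qed.

Lemma sqnorm_eq0 k (u : 'cV[R]_k) : (sqnorm u == 0) = (u == 0).
Proof.
apply/eqP/eqP => [u0|->]; last by rewrite sqnorm_dotv dotv0r.
apply/matrixP => i j; rewrite ord1 mxE.
by apply/eqP; rewrite -sqrf_eq0 (psumr_eq0P (fun i _ => sqr_ge0 _) u0 (i := i)).
Qed.

Lemma sqnorm_lincomb k a b (u v : 'cV[R]_k) :
  sqnorm (a *: u + b *: v) = a ^+ 2 * sqnorm u + 2 * a * b * dotv u v + b ^+ 2 * sqnorm v.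
Proof. by rewrite !sqnorm_dotv !(dotvDl, dotvDr, dotvZl, dotvZr) (dotvC v u); ring. Qed.

Lemma normv_ge0 k (u : 'cV[R]_k) : 0 <= normv u.
Proof. exact: sqrtr_ge0. Qed.

Lemma normv_sqr k (u : 'cV[R]_k) : normv u ^+ 2 = sqnorm u.
Proof. by rewrite sqr_sqrtr // sqnorm_ge0. Qed.

Lemma normv_gt0 k (u : 'cV[R]_k) : (0 < normv u) = (u != 0).
Proof. by rewrite sqrtr_gt0 lt0r sqnorm_eq0 sqnorm_ge0 andbT. Qed.

End Euclidean.

Section Restriction.
Variables (R : rcfType) (m : nat).
Implicit Types (S T C : {set 'I_m}) (h u v : 'cV[R]_m).

Definition restr S h : 'cV[R]_m := \col_i (if i \in S then h i 0 else 0).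
Definition l1_on S h : R := \sum_(i in S) `|h i 0|.

Lemma supp_restr S h : supp (restr S h) \subset S.
Proof. by apply/subsetP => i; rewrite inE mxE; case: (i \in S); rewrite ?eqxx. Qed.

Lemma restr_set0 h : restr set0 h = 0.
Proof. by apply/matrixP => i j; rewrite !mxE inE. Qed.

Lemma restrU S T h : [disjoint S & T] -> restr (S :|: T) h = restr S h + restr T h.
Proof.
move=> dST; apply/matrixP => i j; rewrite ord1 !mxE in_setU.
case: (boolP (i \in S)) => iS /=; last by rewrite add0r.
by rewrite (disjointFr dST iS) addr0.
Qed.

Lemma restr_setD C S h : C \subset S -> restr S h = restr C h + restr (S :\: C) h.
Proof.
move=> /subsetP sCS; apply/matrixP => i j; rewrite ord1 !mxE inE.
by case: (boolP (i \in C)) => iC /=; rewrite ?(sCS _ iC) ?addr0 ?add0r.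
Qed.

Lemma restrC S h : restr S h + restr (~: S) h = h.
Proof.
by apply/matrixP => i j; rewrite ord1 !mxE inE; case: (i \in S); rewrite ?addr0 ?add0r.
Qed.

Lemma supp_lincomb a b u v S T :
  supp u \subset S -> supp v \subset T -> supp (a *: u + b *: v) \subset S :|: T.
Proof.
move=> /subsetP suS /subsetP svT; apply/subsetP => i; rewrite !inE !mxE => uv_i.
have [u_i0|u_i] := eqVneq (u i 0) 0; last by rewrite suS ?inE.
by rewrite svT ?orbT // inE; apply: contraNneq uv_i => ->; rewrite u_i0 !mulr0 addr0.
Qed.

Lemma dotv_disjoint u v S T :
  supp u \subset S -> supp v \subset T -> [disjoint S & T] -> dotv u v = 0.
Proof.
move=> /subsetP suS /subsetP svT dST; rewrite /dotv big1 // => i _.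
have [->|u_i] := eqVneq (u i 0) 0; first by rewrite mul0r.
have [->|v_i] := eqVneq (v i 0) 0; first by rewrite mulr0.
have iT : i \in T by rewrite svT ?inE.
by rewrite (disjointFr dST (suS i _)) ?inE in iT.
Qed.

Lemma sqnorm_restr S h : sqnorm (restr S h) = \sum_(i in S) h i 0 ^+ 2.
Proof.
rewrite /sqnorm (bigID (mem S)) /= [X in _ + X]big1 ?addr0 => [|i /negPf iS].
  by apply: eq_bigr => i iS; rewrite mxE iS.
by rewrite mxE iS expr0n.
Qed.

Lemma normv_restr_subset S T h : S \subset T -> normv (restr S h) <= normv (restr T h).
Proof.
move=> sST; rewrite ler_sqrt ?sqnorm_ge0 // !sqnorm_restr (big_setID S (A := T)).
by rewrite (setIidPr sST) lerDl; apply: sumr_ge0 => i _; apply: sqr_ge0.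
Qed.

Lemma normv_restr_le S h q (a : R) :
  (#|S| <= q)%N -> 0 <= a -> (forall i, i \in S -> `|h i 0| * q%:R <= a) ->
  Num.sqrt q%:R * normv (restr S h) <= a.
Proof.
move=> cS a0 hS; have [->|q0] := posnP q; first by rewrite sqrtr0 mul0r.
have q_gt0 : 0 < q%:R :> R by rewrite ltr0n.
rewrite -(ler_pXn2r (isT : 0 < 2)%N) ?nnegrE ?mulr_ge0 ?sqrtr_ge0 ?normv_ge0 //.
rewrite exprMn sqr_sqrtr ?ler0n // normv_sqr sqnorm_restr -(ler_pM2l q_gt0) mulrA.
rewrite mulr_sumr (le_trans (y := \sum_(i in S) a ^+ 2)) //.
  apply: ler_sum => i iS; rewrite -(real_normK (num_real (h i 0))).
  rewrite (_ : _ * _ = (`|h i 0| * q%:R) ^+ 2); last by ring.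
  by rewrite ler_pXn2r ?nnegrE ?mulr_ge0 ?ler0n ?hS.
rewrite sumr_const -mulr_natl; have : #|S|%:R <= q%:R :> R by rewrite ler_nat.
by have := sqr_ge0 a; nra.
Qed.

Lemma l1_on_ge0 S h : 0 <= l1_on S h.
Proof. by apply: sumr_ge0 => i _; apply: normr_ge0. Qed.

Lemma l1_on_setD C S h : C \subset S -> l1_on S h = l1_on C h + l1_on (S :\: C) h.
Proof. by move=> sCS; rewrite /l1_on (big_setID C) (setIidPr sCS). Qed.

Lemma ler_l1_onD S u v : l1_on S (u + v) <= l1_on S u + l1_on S v.
Proof. by rewrite -big_split; apply: ler_sum => i _; rewrite mxE ler_normD. Qed.

Lemma l1_onN S h : l1_on S (- h) = l1_on S h.
Proof. by apply: eq_bigr => i _; rewrite mxE normrN. Qed.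

Lemma l1_on_sqr_le S h : l1_on S h ^+ 2 <= #|S|%:R * sqnorm (restr S h).
Proof.
rewrite sqnorm_restr (eq_bigr (fun i => `|h i 0| ^+ 2)) => [|i _]; first exact: sqr_sum_le.
by rewrite real_normK // num_real.
Qed.

Lemma l1_on_le_normv S h : l1_on S h <= Num.sqrt #|S|%:R * normv (restr S h).
Proof.
rewrite -(ler_pXn2r (isT : 0 < 2)%N) ?nnegrE ?l1_on_ge0 ?mulr_ge0 ?sqrtr_ge0 //.
by rewrite exprMn sqr_sqrtr ?ler0n // normv_sqr l1_on_sqr_le.
Qed.

Lemma exists_top_subset S h q : (q <= #|S|)%N -> exists C,
  [/\ C \subset S, #|C| = q & forall i j, i \in C -> j \in S :\: C -> `|h j 0| <= `|h i 0|].
Proof.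
elim: q => [|q IH] lt_q.
  by exists set0; split; rewrite ?sub0set ?cards0 // => i j; rewrite inE.
have [C [sCS cC topC]] := IH (ltnW lt_q).
have /card_gt0P [j0 j0_in] : (0 < #|S :\: C|)%N by rewrite cardsD (setIidPr sCS); lia.
pose j := Order.arg_max j0 (mem (S :\: C)) (fun i => `|h i 0|).
have [j_in j_max] : j \in S :\: C /\ forall i, i \in S :\: C -> `|h i 0| <= `|h j 0|.
  by rewrite /j; case: arg_maxP => // i i_in i_max; split => // i'; apply: i_max.
move: (j_in); rewrite inE => /andP[jC jS].
exists (j |: C); split; first by rewrite subUset sub1set jS.
  by rewrite cardsU1 jC cC.
move=> i i'; rewrite !inE => /orP[/eqP -> | iC] /andP[/norP[_ i'C] i'S].
  by apply: j_max; rewrite inE i'C.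
by apply: topC; rewrite // inE i'C.
Qed.

Lemma exists_top_block S h q : exists C,
  [/\ C \subset S, #|C| = minn q #|S| & forall j, j \in S :\: C -> `|h j 0| * q%:R <= l1_on C h].
Proof.
have [le_qS|lt_Sq] := leqP q #|S|.
  have [C [sCS cC topC]] := exists_top_subset h le_qS.
  exists C; split; rewrite ?cC ?(minn_idPl le_qS) // => j j_in.
  by rewrite -cC mulr_natr -sumr_const; apply: ler_sum => i iC; apply: topC.
exists S; split; rewrite ?(minn_idPr (ltnW lt_Sq)) // => j.
by rewrite setDv inE.
Qed.

Lemma card_setU_setD S T : #|S :|: T| = (#|S| + #|T :\: S|)%N.
Proof. by rewrite cardsU cardsD [T :&: S]setIC; have := subset_leq_card (subsetIr S T); lia. Qed.

Lemma card_setD_exchange S T :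
  (#|S| + 2 * #|T :\: S| = #|T| + #|T :\: S| + #|S :\: T|)%N.
Proof.
rewrite !cardsD [T :&: S]setIC.
by have := subset_leq_card (subsetIl S T); have := subset_leq_card (subsetIr S T); lia.
Qed.

End Restriction.

Lemma rip_ineq_le (R : rcfType) n m (A : 'M[R]_(n, m)) s (d d' : R) :
  rip_ineq A s d -> d <= d' -> rip_ineq A s d'.
Proof.
move=> ripA le_dd' b cb; have [lo up] := ripA b cb; have b0 := sqnorm_ge0 b.
by split; [apply: le_trans lo | apply: le_trans up _]; apply: ler_wpM2r => //; lra.
Qed.

Section RestrictedIsometry.
Variables (R : rcfType) (n m : nat) (A : 'M[R]_(n, m)) (k : nat) (d : R).
Hypotheses (d_ge0 : 0 <= d) (ripA : rip_ineq A k d).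
Implicit Types (S T C U V W : {set 'I_m}) (h u v w x : 'cV[R]_m).

Lemma rip_kernel_eq0 h : d < 1 -> A *m h = 0 -> (#|supp h| <= k)%N -> h = 0.
Proof.
move=> d1 Ah ch; have [lo _] := ripA ch; apply/eqP; rewrite -sqnorm_eq0.
rewrite Ah [sqnorm 0]sqnorm_dotv dotv0r in lo; have := sqnorm_ge0 h.
by rewrite eq_le => ->; rewrite andbT -(pmulr_rle0 _ (_ : 0 < 1 - d)) ?subr_gt0.
Qed.

(* Polarization: apply the RIP to [b u + a v] and [b u - a v] with [a = |u|], [b = |v|]. *)
Lemma rip_dotv_disjoint u v U V :
  supp u \subset U -> supp v \subset V -> [disjoint U & V] -> (#|U :|: V| <= k)%N ->
  `|dotv (A *m u) (A *m v)| <= d * (normv u * normv v).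
Proof.
move=> suU svV dUV cUV.
have [->|u0] := eqVneq u 0; first by rewrite mulmx0 dotvC dotv0r normr0 !mulr_ge0 ?normv_ge0.
have [->|v0] := eqVneq v 0; first by rewrite mulmx0 dotv0r normr0 !mulr_ge0 ?normv_ge0.
set a := normv u; set b := normv v; set X := dotv (A *m u) (A *m v).
have ab_gt0 : 0 < a * b by rewrite mulr_gt0 ?normv_gt0.
have key (s : R) : s ^+ 2 = 1 -> s * (a * b * X) <= d * (a * b) ^+ 2.
  move=> s2; have uv0 := dotv_disjoint suU svV dUV.
  have rip_at z := ripA (leq_trans (subset_leq_card (supp_lincomb b z suU svV)) cUV).
  have [_ up] := rip_at (s * a); have [lo _] := rip_at (- (s * a)).
  rewrite !mulmxDr -!scalemxAr !sqnorm_lincomb uv0 -(normv_sqr u) -(normv_sqr v) -/a -/b -/X in up lo.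
  rewrite sqrrN !exprMn s2 !mul1r in up lo.
  lra.
have := key 1 (expr1n _ _); have := key (-1); rewrite sqrrN expr1n => /(_ erefl).
rewrite !mulN1r !mul1r => lo up.
by rewrite ler_norml; apply/andP; split; rewrite -(ler_pM2l ab_gt0); lra.
Qed.

Lemma rip_dotv_block w h W S q (a : R) :
  supp w \subset W -> [disjoint W & S] -> (#|W| + q <= k)%N -> (#|S| <= q)%N ->
  0 <= a -> (forall i, i \in S -> `|h i 0| * q%:R <= a) ->
  Num.sqrt q%:R * `|dotv (A *m w) (A *m restr S h)| <= d * normv w * a.
Proof.
move=> swW dWS cW cS a0 hS.
have cWS : (#|W :|: S| <= k)%N by rewrite cardsU; lia.
have dot_le := rip_dotv_disjoint swW (supp_restr S h) dWS cWS.
apply: le_trans (ler_wpM2l (sqrtr_ge0 _) dot_le) _.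
have -> : Num.sqrt q%:R * (d * (normv w * normv (restr S h)))
    = d * normv w * (Num.sqrt q%:R * normv (restr S h)) by ring.
by apply: ler_wpM2l; rewrite ?mulr_ge0 ?normv_ge0 ?normv_restr_le.
Qed.

(* The shelling argument: cut [S :\: C] into q-blocks of decreasing magnitude; each block
   is dominated entrywise by the mean of the previous one, so the block bounds telescope. *)
Lemma rip_dotv_tail w h W C S q :
  supp w \subset W -> (#|W| + q <= k)%N -> C \subset S -> [disjoint W & S :\: C] ->
  (forall j, j \in S :\: C -> `|h j 0| * q%:R <= l1_on C h) ->
  Num.sqrt q%:R * `|dotv (A *m w) (A *m restr (S :\: C) h)| <= d * normv w * l1_on S h.
Proof.
move=> swW cW; have [N] := ubnP #|S :\: C|; elim: N C S => // N IH C S ltN sCS dW topC.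
have rhs_ge0 := mulr_ge0 (mulr_ge0 d_ge0 (normv_ge0 w)) (l1_on_ge0 S h).
have [->|q0] := posnP q; first by rewrite sqrtr0 mul0r.
have [->|S'0] := eqVneq (S :\: C) set0; first by rewrite restr_set0 mulmx0 dotv0r normr0 mulr0.
have [C' [sC' cC' topC']] := exists_top_block (S :\: C) h q.
have ltN' : (#|(S :\: C) :\: C'| < N)%N.
  by rewrite cardsD (setIidPr sC') cC'; move: S'0; rewrite -card_gt0; lia.
rewrite (restr_setD h sC') mulmxDr dotvDr (l1_on_setD h sCS).
apply: le_trans (ler_wpM2l (sqrtr_ge0 _) (ler_normD _ _)) _.
rewrite !mulrDr; apply: lerD.
  apply: rip_dotv_block swW (disjointWr sC' dW) cW _ (l1_on_ge0 C h) _.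
    by rewrite cC' geq_minl.
  by move=> i iC'; apply: topC; apply: (subsetP sC').
exact: IH ltN' sC' (disjointWr (subsetDl _ _) dW) topC'.
Qed.

(* [u] is [h] on [T :|: N] together with the [q] largest entries outside it; since
   [A u = - A v], the RIP lower bound on [u] is paid for by the shelling bound on [v]. *)
Lemma rip_kernel_energy T N h :
  (#|T| + 2 * #|N :\: T| <= k)%N -> A *m h = 0 ->
  exists a, [/\ 0 <= a, l1_on (N :\: T) h <= Num.sqrt #|N :\: T|%:R * a &
    Num.sqrt #|N :\: T|%:R * ((1 - d) * a ^+ 2) <= 2 * d * a * l1_on (~: (T :|: N)) h].
Proof.
move=> cTN Ah.
set D := N :\: T; set S0 := T :|: N; set L := l1_on (~: S0) h; set q := #|D|.
have {}cTN : (#|T| + 2 * q <= k)%N := cTN.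
have [C [sC cC topC]] := exists_top_block (~: S0) h q.
have cS0 : #|S0| = (#|T| + q)%N by rewrite card_setU_setD.
have cC_q : (#|C| <= q)%N by rewrite cC geq_minl.
have dS0C : [disjoint S0 & C] by rewrite disjoint_sym disjoints_subset.
set u := restr (S0 :|: C) h; set v := restr (~: S0 :\: C) h.
have vE : ~: S0 :\: C = ~: (S0 :|: C) by rewrite setDE setCU.
have Au : A *m u = - (A *m v) by apply/eqP; rewrite -addr_eq0 -mulmxDr /u /v vE restrC Ah.
have tail W : W \subset S0 :|: C -> (#|W| + q <= k)%N ->
    Num.sqrt q%:R * `|dotv (A *m restr W h) (A *m v)| <= d * normv u * L.
  move=> sW cW; apply: le_trans (rip_dotv_tail (supp_restr W h) cW sC _ topC) _.
    by apply: disjointWl sW _; rewrite disjoint_sym disjoints_subset vE.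
  by rewrite ler_wpM2r ?l1_on_ge0 ?ler_wpM2l ?normv_restr_subset.
have cS0q : (#|S0| + q <= k)%N by rewrite cS0; lia.
have cCq : (#|C| + q <= k)%N by lia.
have t0 := tail S0 (subsetUl _ _) cS0q; have t1 := tail C (subsetUr _ _) cCq.
set X0 := dotv (A *m restr S0 h) (A *m v) in t0 *.
set X1 := dotv (A *m restr C h) (A *m v) in t1 *.
have lower : (1 - d) * normv u ^+ 2 <= - (X0 + X1).
  have cU : (#|S0 :|: C| <= k)%N by rewrite cardsU; lia.
  have [lo _] := ripA (leq_trans (subset_leq_card (supp_restr (S0 :|: C) h)) cU).
  rewrite normv_sqr (le_trans lo) // sqnorm_dotv {2}Au dotvNr /u restrU //.
  by rewrite mulmxDr dotvDl.
exists (normv u); split; first exact: normv_ge0.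
  apply: le_trans (l1_on_le_normv D h) _; rewrite ler_wpM2l ?sqrtr_ge0 //.
  by rewrite normv_restr_subset // (subset_trans (subsetDl N T)) // (subset_trans (subsetUr T N)) ?subsetUl.
have nX : - (X0 + X1) <= `|X0| + `|X1| by rewrite opprD lerD // -normrN ler_norm.
have := ler_wpM2l (sqrtr_ge0 q%:R) (le_trans lower nX); rewrite mulrDr; lra.
Qed.

Lemma rip_null_space_bound T N h :
  (#|T| + 2 * #|N :\: T| <= k)%N -> A *m h = 0 ->
  (1 - d) * l1_on (N :\: T) h <= 2 * d * l1_on (~: (T :|: N)) h.
Proof.
move=> cTN Ah; have [a [a0 hD energy]] := rip_kernel_energy cTN Ah.
have RHS_ge0 : 0 <= 2 * d * l1_on (~: (T :|: N)) h by rewrite !mulr_ge0 ?l1_on_ge0.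
have [d1|d1] := lerP 1 d.
  by apply: le_trans RHS_ge0; rewrite mulr_le0_ge0 ?l1_on_ge0 // subr_le0.
apply: le_trans (ler_wpM2l _ hD) _; first by rewrite subr_ge0 ltW.
have [->|a_neq0] := eqVneq a 0; first by rewrite !mulr0.
have a_gt0 : 0 < a by rewrite lt0r a_neq0.
rewrite -(ler_pM2l a_gt0); apply: le_trans (le_trans _ energy) _.
all: by rewrite le_eqVlt; apply/orP; left; apply/eqP; ring.
Qed.

Lemma rip_null_space_property T N h :
  3 * d < 1 -> (#|T| + 2 * #|N :\: T| <= k)%N -> A *m h = 0 -> h != 0 ->
  l1_on (N :\: T) h < l1_on (~: (T :|: N)) h.
Proof.
move=> d3 cTN Ah h_neq0; have bound := rip_null_space_bound cTN Ah.
have L_gt0 : 0 < l1_on (~: (T :|: N)) h.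
  rewrite lt0r l1_on_ge0 andbT; apply: contra h_neq0 => /eqP L0; apply/eqP.
  apply: rip_kernel_eq0 Ah _; first by lra.
  apply: leq_trans (subset_leq_card (_ : supp h \subset T :|: N)) _.
    apply/subsetP => i; rewrite inE; apply: contraR => iTN.
    by rewrite -normr_eq0 (psumr_eq0P (fun j _ => normr_ge0 _) L0) // inE.
  by rewrite card_setU_setD; lia.
have := l1_on_ge0 (N :\: T) h; nra.
Qed.

Lemma l1_off_split T N h : l1_off T h = l1_on (N :\: T) h + l1_on (~: (T :|: N)) h.
Proof.
have -> : l1_off T h = l1_on (~: T) h by apply: eq_bigl => i; rewrite inE.
rewrite (l1_on_setD h (_ : N :\: T \subset ~: T)); last by rewrite setDE subsetIr.
by congr (_ + l1_on _ h); apply/setP => i; rewrite !inE; case: (i \in T); case: (i \in N).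
Qed.

(* On [supp x :\: T] the vector [b] loses at most the mass of [h = b - x] there, which the
   null space property makes smaller than the mass [b] gains outside [T :|: supp x]. *)
Lemma modcs_l1_off_lt T x b :
  3 * d < 1 -> (#|T| + 2 * #|supp x :\: T| <= k)%N -> A *m b = A *m x -> b != x ->
  l1_off T x < l1_off T b.
Proof.
move=> d3 cT Abx b_neq_x; set h := b - x; set U := ~: (T :|: supp x).
have nsp := rip_null_space_property d3 cT (_ : A *m h = 0) (_ : h != 0).
rewrite !(l1_off_split T (supp x)).
have xU i : i \in U -> x i 0 = 0 by rewrite !inE negb_or => /andP[_ /negPn/eqP].
have -> : l1_on U x = 0 by rewrite /l1_on big1 // => i /xU ->; rewrite normr0.
have -> : l1_on U b = l1_on U h by apply: eq_bigr => i /xU xi0; rewrite !mxE xi0 subr0.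
have x_le : l1_on (supp x :\: T) x <= l1_on (supp x :\: T) b + l1_on (supp x :\: T) h.
  by rewrite -(l1_onN _ h) (le_trans _ (ler_l1_onD _ b (- h))) // /h opprB addrC subrK.
rewrite addr0; apply: le_lt_trans x_le _; rewrite ltrD2l nsp //.
- by rewrite /h mulmxBr Abx subrr.
- by rewrite /h subr_eq0.
Qed.

Lemma modcs_exact T x :
  3 * d < 1 -> (#|T| + 2 * #|supp x :\: T| <= k)%N ->
  is_l1sol A (A *m x) T x /\ (forall b, is_l1sol A (A *m x) T b -> b = x).
Proof.
move=> d3 cT; split.
  split=> // b Abx; have [->|b_neq_x] := eqVneq b x; first exact: lexx.
  exact/ltW/(modcs_l1_off_lt d3 cT).
move=> b [Abx b_opt]; apply/eqP/negP => /negP b_neq_x.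
have := modcs_l1_off_lt d3 cT (esym Abx) (b_neq_x); have := b_opt x erefl.
by move=> /le_lt_trans lt /lt; rewrite ltxx.
Qed.

End RestrictedIsometry.

Unset Implicit Arguments.
Set Strict Implicit.

Theorem mainTheorem1 (R : rcfType) (m : nat) (n : nat -> nat)
    (A : forall t : nat, 'M[R]_(n t, m)) (x : nat -> 'cV[R]_m)
    (xhat : nat -> 'cV[R]_m) :
  (exists d : R, is_RIC (A 0%N) (2 * #|supp (x 0%N)|)%N d /\ d <= 1 / 5%:R) ->
  (forall t : nat, (0 < t)%N ->
     exists d : R,
       is_RIC (A t) (#|supp (x t)| + #|supp (x t) :\: supp (x t.-1)|
                     + #|supp (x t.-1) :\: supp (x t)|)%N d
       /\ d <= 1 / 5%:R) ->
  (forall t : nat, is_l1sol (A t) (A t *m x t) (prevT xhat t) (xhat t)) ->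
  forall t : nat,
    xhat t = x t /\
    is_l1sol (A t) (A t *m x t) (prevT xhat t) (x t) /\
    (forall b : 'cV[R]_m, is_l1sol (A t) (A t *m x t) (prevT xhat t) b -> b = x t).
Proof.
move=> ric0 ricS sol.
have d_ge0 : 0 <= 1 / 5%:R :> R by rewrite divr_ge0 ?ler0n.
have d3 : 3 * (1 / 5%:R) < 1 :> R by rewrite mul1r ltr_pdivrMr ?ltr0n // mul1r ltr_nat.
have rip t : rip_ineq (A t) (#|prevT x t| + 2 * #|supp (x t) :\: prevT x t|) (1 / 5%:R).
  case: t => [|t] /=.
    have [d [[ripd _] d_le]] := ric0.
    by rewrite cards0 setD0 add0n; apply: rip_ineq_le ripd d_le.
  have [d [[ripd _] d_le]] := ricS t.+1 isT.
  by rewrite card_setD_exchange; apply: rip_ineq_le ripd d_le.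
have recovery t := modcs_exact d_ge0 (rip t) d3 (leqnn _).
have xhat_eq t : xhat t = x t.
  elim: t => [|t IH]; first exact: (recovery 0%N).2 _ (sol 0%N).
  by have := sol t.+1; rewrite /= IH; apply: (recovery t.+1).2.
have prevT_eq t : prevT xhat t = prevT x t by case: t => //= t; rewrite xhat_eq.
by move=> t; rewrite prevT_eq; split; [exact: xhat_eq | exact: recovery].
Qed.
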